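(* Let $N\in\mathbb N$, $F=\mathbb Z/N\mathbb Z$, and let $\sigma\in G_F$ have at most four blocks, i.e. $|\{f\in F:\sigma_f\neq\sigma_{f+1}\}|\le 4$. Then $D_{\rm stab}(\sigma)=D_{\rm sym}(\sigma)$.
   Context: $G_F=\{-1,1\}^F$, $A_F(\sigma)_f=\sum_{\ell\in F}\sigma_\ell\sigma_{\ell+f}$, $D_{\rm stab}(\sigma)=|\{\tau\in G_F: A_F(\tau)=A_F(\sigma)\}|$. The group $\mathcal S_F=\{-1,1\}\times(F\rtimes\{-1,1\})$ acts on $G_F$ by $\Phi_{(s,t,r)}(\sigma)_f=s\,\sigma_{rf+t}$ ($s,r\in\{-1,1\}$, $t\in F$), and $D_{\rm sym}(\sigma)$ is the cardinality of the orbit of $\sigma$ under this action. *)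

From mathcomp Require Import all_boot all_order all_algebra.
Set Implicit Arguments. Unset Strict Implicit. Unset Printing Implicit Defensive.
Import GRing.Theory.

(* F = Z/NZ with N = n.+1 >= 1, realized as the cyclic group 'I_N
   (canonical zmodType structure of 'I_n.+1: addition and opposite mod N). *)

(* An element of G_F = {-1,1}^F is encoded as a boolean function:
   true <-> -1, false <-> +1. *)
Definition pm (b : bool) : int := if b then (-1)%R else 1%R.

Section Defs.
Variable n : nat.
Local Notation F := 'I_n.+1.
Local Notation GF := {ffun F -> bool}.

Definition oneF : F := inZp 1.

Definition autocorr (s : GF) (f : F) : int :=
  (\sum_(l : F) pm (s l) * pm (s (l + f)%R))%R.

Definition Dstab (s : GF) : nat :=
  #|[set t : GF | [forall f, autocorr t f == autocorr s f]]|.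

(* Action of (s,t,r) in {-1,1} x (F x| {-1,1}):
   Phi_(s,t,r)(sigma)_f = s * sigma_(r f + t).
   s = -1 <-> sb = true (flips the sign); r = -1 <-> rb = true (f |-> -f). *)
Definition Phi (sb : bool) (t : F) (rb : bool) (sg : GF) : GF :=
  [ffun f : F => sb (+) sg ((if rb then - f else f) + t)%R].

Definition Dsym (sg : GF) : nat :=
  #|[set Phi p.1.1 p.1.2 p.2 sg | p : bool * F * bool]|.

Definition nblocks (sg : GF) : nat :=
  #|[set f : F | sg f != sg (f + oneF)%R]|.
End Defs.

From mathcomp Require Import all_boot all_order all_algebra.
From mathcomp Require Import zify ring.
Set Implicit Arguments. Unset Strict Implicit. Unset Printing Implicit Defensive.
Import GRing.Theory Num.Theory.

(* A sign sequence is determined, up to a global sign, by the positions of its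
   jumps (the f with sigma_f <> sigma_(f+1)); there is an even number of them.
   The autocorrelation A determines the number of jumps (A(1) = N - 2 #jumps),
   the signed correlation of the jump positions (4 times it is the second
   difference 2A(f) - A(f+1) - A(f-1)) and the square of the sum of the signs
   (the sum of all A(f)).  Since signs at consecutive jumps alternate, the
   generating polynomial of that correlation, completed by a few explicit
   monomials, factors as the product of (1 - X^g) over the cyclic gaps g
   between jumps, and such a product determines the multiset of gaps.  With at
   most four jumps, the sum of the signs (the difference of the two sums of
   opposite gaps) then pins down the cyclic gap sequence up to rotation and
   reflection, i.e. the jump set up to a shift or a reflection of F. *)

Lemma perm_cons_cat (T : eqType) (x : T) s s1 s2 :
  perm_eq (x :: s) (s1 ++ x :: s2) -> perm_eq s (s1 ++ s2).
Proof.
move=> h; rewrite -(perm_cons x); apply: (perm_trans h).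
by rewrite -cat1s perm_catCA.
Qed.

Lemma perm_eq_single (T : eqType) (x a : T) : perm_eq [:: x] [:: a] -> x = a.
Proof. by move/perm_mem/(_ x); rewrite !inE eqxx => /esym/eqP. Qed.

Lemma perm_eq_pair (T : eqType) (x y a b : T) : perm_eq [:: x; y] [:: a; b] ->
  (x = a /\ y = b) \/ (x = b /\ y = a).
Proof.
move=> h; have := perm_mem h x; rewrite !inE eqxx => /esym /orP[] /eqP ex; subst x.
  by left; split => //; apply: perm_eq_single (perm_cons_cat (s1 := [::]) h).
by right; split => //; apply: perm_eq_single (perm_cons_cat (s1 := [:: a]) h).
Qed.

Lemma perm_eq_triple (T : eqType) (x y z a b c : T) : perm_eq [:: x; y; z] [:: a; b; c] ->
  (x = a /\ y = b /\ z = c) \/ (x = a /\ y = c /\ z = b) \/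
  (x = b /\ y = a /\ z = c) \/ (x = b /\ y = c /\ z = a) \/
  (x = c /\ y = a /\ z = b) \/ (x = c /\ y = b /\ z = a).
Proof.
move=> h; have := perm_mem h x; rewrite !inE eqxx => /esym.
case/orP => [/eqP ex|/orP [] /eqP ex]; subst x.
- by case: (perm_eq_pair (perm_cons_cat (s1 := [::]) h)) => [[-> ->]|[-> ->]]; tauto.
- by case: (perm_eq_pair (perm_cons_cat (s1 := [:: a]) h)) => [[-> ->]|[-> ->]]; tauto.
- by case: (perm_eq_pair (perm_cons_cat (s1 := [:: a; b]) h)) => [[-> ->]|[-> ->]]; tauto.
Qed.

Ltac pick_disjunct := lazymatch goal with
  | |- _ \/ _ => first [ by left; repeat split; lia | right; pick_disjunct ]
  | _ => by repeat split; lia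
  end.

Lemma dihedral_of_perm_eq4 (g1 g2 g3 g4 h1 h2 h3 h4 : nat) :
  perm_eq [:: h1; h2; h3; h4] [:: g1; g2; g3; g4] ->
  (h1 + h3 = g1 + g3 \/ h1 + h3 = g2 + g4)%N ->
  (h1 = g1 /\ h2 = g2 /\ h3 = g3 /\ h4 = g4) \/
  (h1 = g2 /\ h2 = g3 /\ h3 = g4 /\ h4 = g1) \/
  (h1 = g3 /\ h2 = g4 /\ h3 = g1 /\ h4 = g2) \/
  (h1 = g4 /\ h2 = g1 /\ h3 = g2 /\ h4 = g3) \/
  (h1 = g3 /\ h2 = g2 /\ h3 = g1 /\ h4 = g4) \/
  (h1 = g2 /\ h2 = g1 /\ h3 = g4 /\ h4 = g3) \/
  (h1 = g1 /\ h2 = g4 /\ h3 = g3 /\ h4 = g2) \/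
  (h1 = g4 /\ h2 = g3 /\ h3 = g2 /\ h4 = g1).
Proof.
move=> h hp; have hs := perm_sumn h; rewrite /= !addn0 in hs.
have := perm_mem h h1; rewrite !inE eqxx /= => /esym.
case/orP => [/eqP ex|/orP [/eqP ex|/orP [] /eqP ex]]; subst h1.
- case: (perm_eq_triple (perm_cons_cat (s1 := [::]) h)) => [|[|[|[|[|]]]]] [? [? ?]];
    subst; clear h; case: hp => hp; pick_disjunct.
- case: (perm_eq_triple (perm_cons_cat (s1 := [:: g1]) h)) => [|[|[|[|[|]]]]] [? [? ?]];
    subst; clear h; case: hp => hp; pick_disjunct.
- case: (perm_eq_triple (perm_cons_cat (s1 := [:: g1; g2]) h)) => [|[|[|[|[|]]]]] [? [? ?]];
    subst; clear h; case: hp => hp; pick_disjunct.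
- case: (perm_eq_triple (perm_cons_cat (s1 := [:: g1; g2; g3]) h)) => [|[|[|[|[|]]]]] [? [? ?]];
    subst; clear h; case: hp => hp; pick_disjunct.
Qed.

Local Open Scope ring_scope.

Definition prod_one_sub_Xn (s : seq nat) : {poly int} := \prod_(g <- s) (1 - 'X^g).

Lemma coef0_prod_one_sub_Xn s : all (fun g => 0 < g)%N s -> (prod_one_sub_Xn s)`_0 = 1.
Proof.
elim: s => [|g s IH] /=; first by rewrite /prod_one_sub_Xn big_nil coef1.
case/andP=> g0 hs; rewrite /prod_one_sub_Xn big_cons mulrBl mul1r coefB coefXnM.
by rewrite g0 IH // subr0.
Qed.

Lemma coef_prod_one_sub_Xn_min m s : (0 < m)%N -> all (fun g => m <= g)%N s ->
  (prod_one_sub_Xn s)`_m = - (count_mem m s)%:R.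
Proof.
move=> m0; elim: s => [|g s IH] /=.
  by rewrite /prod_one_sub_Xn big_nil coef1; case: m m0.
case/andP=> gm hs; rewrite /prod_one_sub_Xn big_cons mulrBl mul1r coefB coefXnM.
rewrite IH //; case: ltngtP gm => // [hg|<-] _; first by rewrite add0n subr0.
rewrite subnn coef0_prod_one_sub_Xn ?add1n ?mulrS ?opprD 1?addrC //.
by apply/allP=> x xs; apply: leq_trans m0 _; exact: (allP hs).
Qed.

(* The least positive exponent [m] is read off as the coefficient of ['X^m];
   cancelling the factor [1 - 'X^m] gives the induction. *)
Lemma perm_eq_prod_one_sub_Xn s t :
  all (fun g => 0 < g)%N s -> all (fun g => 0 < g)%N t ->
  prod_one_sub_Xn s = prod_one_sub_Xn t -> perm_eq s t.
Proof.
move: {2}(size s + size t)%N (leqnn (size s + size t)) => k.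
elim: k s t => [|k IH] s t; first by case: s; case: t.
move=> hk hs ht e.
have [st0|[x xst]] : s ++ t = [::] \/ exists x, x \in s ++ t.
  by case: (s ++ t) => [|x r]; [left | right; exists x; rewrite inE eqxx].
by move/(congr1 size)/eqP: st0; rewrite size_cat addn_eq0 !size_eq0 => /andP[/eqP-> /eqP->].
have [m mst mmin] := ex_minnP (ex_intro (fun y => y \in s ++ t) x xst).
have m0 : (0 < m)%N by move: mst; rewrite mem_cat => /orP[/(allP hs)|/(allP ht)].
have ge_m u : u \in [:: s; t] -> all (fun g => m <= g)%N u.
  by rewrite !inE => /orP[] /eqP-> ; apply/allP => y hy; apply: mmin; rewrite mem_cat hy ?orbT.
have ecount : count_mem m s = count_mem m t.
  move/(congr1 (fun p : {poly int} => p`_m)): e.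
  rewrite !coef_prod_one_sub_Xn_min ?ge_m ?inE ?eqxx ?orbT // => /oppr_inj/eqP.
  by rewrite eqr_nat => /eqP.
have [ms mt] : m \in s /\ m \in t.
  by move: mst; rewrite mem_cat -!has_pred1 !has_count ecount orbb.
have ps := perm_to_rem ms; have pt := perm_to_rem mt.
have nz : (1 - 'X^m : {poly int}) != 0.
  apply/eqP => /(congr1 (fun p : {poly int} => p`_0)).
  by rewrite coefB coef1 coefXn eqxx coef0 eq_sym (gtn_eqF m0) subr0.
have factor u : m \in u -> prod_one_sub_Xn u = (1 - 'X^m) * prod_one_sub_Xn (rem m u).
  by move=> mu; rewrite /prod_one_sub_Xn (perm_big _ (perm_to_rem mu)) big_cons.
have er : prod_one_sub_Xn (rem m s) = prod_one_sub_Xn (rem m t).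
  by apply: (mulfI nz); rewrite -!factor.
rewrite (perm_trans ps) // perm_sym (perm_trans pt) // perm_sym perm_cons.
apply: IH er.
- by move: hk; rewrite (perm_size ps) (perm_size pt) /=; lia.
- by apply/allP=> y /mem_rem /(allP hs).
- by apply/allP=> y /mem_rem /(allP ht).
Qed.

Lemma pmD a b : pm (a (+) b) = pm a * pm b.
Proof. by case: a; case: b; rewrite /pm /= ?mulN1r ?mul1r ?opprK. Qed.

Lemma pm_mulss a : pm a * pm a = 1.
Proof. by case: a; rewrite /pm ?mulN1r ?opprK ?mul1r. Qed.

Lemma pm_mulsN a : pm a * pm (~~ a) = -1.
Proof. by case: a; rewrite /pm ?mulN1r ?mulr1. Qed.

Lemma pm_mulNs a : pm (~~ a) * pm a = -1.
Proof. by rewrite mulrC pm_mulsN. Qed.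

Lemma pmN b : pm (~~ b) = - pm b.
Proof. by case: b; rewrite /pm ?opprK. Qed.

Lemma pm_sqr b : pm b ^+ 2 = 1.
Proof. by rewrite expr2 pm_mulss. Qed.

Ltac decide_nat_tests :=
  repeat match goal with
  | |- context [(?a <= ?b)%N] =>
      let e := fresh in
      first [have e : (a <= b)%N = true by lia | have e : (a <= b)%N = false by lia];
      rewrite e; clear e
  | |- context [?a == ?b] =>
      let e := fresh in
      match type of a with nat => idtac end;
      first [have e : (a == b) = true by lia | have e : (a == b) = false by lia];
      rewrite e; clear e
  end.

Section CyclicSequences.
Variable n : nat.
Local Notation N := n.+1.
Local Notation F := 'I_n.+1.
Local Notation GF := {ffun F -> bool}.
Implicit Types (s t : GF) (f : F).

Lemma inZpD i j : inZp i + inZp j = inZp (i + j) :> F.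
Proof. by apply: val_inj; rewrite /= modnDm. Qed.

Lemma inZpDN i : inZp (i + N) = inZp i :> F.
Proof. by apply: val_inj; rewrite /= modnDr. Qed.

Lemma inZp0 : inZp 0 = 0 :> F.
Proof. by apply: val_inj; rewrite /= mod0n. Qed.

Lemma inZpB d c : (c < N)%N -> inZp d - inZp c = inZp (d + (N - c)) :> F.
Proof.
move=> cN; apply/eqP; rewrite subr_eq inZpD.
have -> : (d + (N - c) + c = d + N)%N by lia.
by rewrite inZpDN.
Qed.

Lemma inZp_inj i j : (i < N)%N -> (j < N)%N -> (inZp i == inZp j :> F) = (i == j).
Proof. by move=> hi hj; rewrite -val_eqE /= !modn_small. Qed.

Lemma val_inZpB i j : (i < N)%N -> (j < N)%N ->
  nat_of_ord (inZp j - inZp i : F) = if (i <= j)%N then (j - i)%N else (j + N - i)%N.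
Proof.
move=> hi hj; rewrite inZpB //=; case: leqP => hij.
  have -> : (j + (N - i) = (j - i) + N)%N by lia.
  by rewrite modnDr modn_small //; lia.
by rewrite modn_small; lia.
Qed.

Lemma inZp_addE a d b :
  (a + d = b \/ a + d = b + N \/ a + d = b + N + N)%N -> inZp a + inZp d = inZp b :> F.
Proof. by rewrite inZpD => -[->|[->|->]]; rewrite ?inZpDN. Qed.

Lemma inZp_subE a d b : (a < N)%N ->
  (d + (N - a) = b \/ d + (N - a) = b + N \/ d + (N - a) = b + N + N)%N ->
  inZp d - inZp a = inZp b :> F.
Proof. by move=> ha; rewrite inZpB // => -[->|[->|->]]; rewrite ?inZpDN. Qed.

Lemma iota_index_iota : iota 0 N = index_iota 0 N.
Proof. by rewrite /index_iota subn0. Qed.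

Definition jump s f := s f != s (f + oneF n).

Lemma sign_succ s i : s (inZp i.+1) = s (inZp i) (+) jump s (inZp i).
Proof. by rewrite /jump /oneF inZpD addn1; case: (s _); case: (s _). Qed.

Lemma sign_count_jumps s i :
  s (inZp i) = s 0 (+) odd (count (fun j => jump s (inZp j)) (iota 0 i)).
Proof.
elim: i => [|i IH]; first by rewrite inZp0 /= addbF.
by rewrite sign_succ -[i.+1]addn1 iotaD count_cat oddD /= addn0 add0n oddb addbA -IH.
Qed.

Lemma eq_from_jumps s t : (forall f, jump s f = jump t f) -> s 0 = t 0 -> s = t.
Proof.
move=> hj h0; apply/ffunP=> f; rewrite -(valZpK f) !sign_count_jumps h0.
by congr (_ (+) odd _); apply: eq_count => i; rewrite hj.
Qed.

Definition jumps s := [seq i <- iota 0 N | jump s (inZp i)].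

Lemma mem_jumps s i : (i \in jumps s) = (i < N)%N && jump s (inZp i).
Proof. by rewrite mem_filter mem_iota add0n andbC. Qed.

Definition jumpsF s : seq F := map inZp (jumps s).

Lemma mem_jumpsF s f : (f \in jumpsF s) = jump s f.
Proof.
apply/mapP/idP => [[i + ->]|h]; first by rewrite mem_jumps => /andP[].
by exists (nat_of_ord f); rewrite ?valZpK // mem_jumps ltn_ord valZpK.
Qed.

Lemma size_jumps s : size (jumps s) = nblocks s.
Proof.
rewrite size_filter /nblocks -sum1_card -sum1_count iota_index_iota big_mkord.
by apply: eq_bigl => i; rewrite inE valZpK.
Qed.

Lemma jumps_sorted_bounded s : sorted ltn (jumps s) && all (fun i => i < N)%N (jumps s).
Proof.
rewrite (sorted_filter ltn_trans) ?iota_ltn_sorted //.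
by apply/allP => i; rewrite mem_jumps => /andP[].
Qed.

Lemma sign_jumps s i : (i <= N)%N ->
  s (inZp i) = s 0 (+) odd (count (fun j => j < i)%N (jumps s)).
Proof.
move=> iN; have splitN : iota 0 N = iota 0 i ++ iota i (N - i) by rewrite -iotaD subnKC.
rewrite sign_count_jumps /jumps splitN filter_cat count_cat.
rewrite (@eq_in_count _ _ pred0 (filter _ (iota i _))); last first.
  by move=> j; rewrite mem_filter mem_iota /= => /andP[_ /andP[+ _]]; rewrite ltnNge => ->.
by rewrite count_pred0 addn0 count_filter; congr (_ (+) odd _); apply: eq_in_count => j;
  rewrite mem_iota add0n /= => ->.
Qed.

Lemma nblocks_even s : ~~ odd (nblocks s).
Proof.
have inZpN : inZp N = 0 :> F by rewrite -[in LHS](add0n N) inZpDN inZp0.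
have := sign_jumps s (leqnn N); rewrite inZpN.
rewrite (eq_in_count (a2 := predT)) ?count_predT ?size_jumps; last first.
  by move=> j; rewrite mem_jumps => /andP[].
by case: (odd _); case: (s _).
Qed.

Lemma sum_jumps (V : zmodType) s (G : F -> V) :
  \sum_(l : F) (if jump s l then G l else 0) = \sum_(i <- jumps s) G (inZp i).
Proof.
rewrite big_filter iota_index_iota big_mkord [RHS]big_mkcond.
by apply: eq_bigr => i _; rewrite valZpK.
Qed.

Lemma autocorr_Phi sb d rb s f : autocorr (Phi sb d rb s) f = autocorr s f.
Proof.
rewrite /autocorr /Phi.
under eq_bigr => l _ do rewrite !ffunE !pmD mulrACA pm_mulss mul1r.
case: rb.
  rewrite (reindex_inj (h := fun l => - l - f + d)); last first.
    by move=> x y /= /addIr /addIr /oppr_inj.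
  apply: eq_bigr => l _; rewrite mulrC; congr (pm (s _) * pm (s _)).
    by rewrite addrAC subrK opprD opprK subrK.
  by rewrite opprD subrK opprD !opprK.
rewrite (reindex_inj (addIr (- d))); apply: eq_bigr => l _.
by rewrite subrK addrAC subrK.
Qed.

Lemma autocorr_oneF s : autocorr s (oneF n) = N%:R - 2 * (nblocks s)%:R.
Proof.
have -> : (nblocks s)%:R = \sum_(l : F) (jump s l)%:R :> int.
  rewrite /nblocks -sum1_card natr_sum [LHS]big_mkcond /=.
  by apply: eq_bigr => l _; rewrite inE /jump; case: (_ != _).
have -> : N%:R = \sum_(l : F) 1 :> int by rewrite sumr_const card_ord.
rewrite /autocorr mulr_sumr -sumrB; apply: eq_bigr => l _; rewrite /jump.
by case: (s l); case: (s (l + oneF n)).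
Qed.

Lemma sum_autocorr s : \sum_f autocorr s f = (\sum_l pm (s l)) ^+ 2.
Proof.
rewrite /autocorr exchange_big expr2 mulr_suml; apply: eq_bigr => l _.
by rewrite -mulr_sumr [in RHS](reindex_inj (addrI l)).
Qed.

Definition jump_corr s f : int :=
  \sum_(l : F) (if jump s l && jump s (l + f) then pm (s l) * pm (s (l + f)) else 0).

(* [pm (s l) - pm (s (l + 1))] is [2 pm (s l)] at a jump and [0] elsewhere, so the
   correlation of these differences is [4 jump_corr]; expanding it gives
   autocorrelations. *)
Lemma jump_corr_autocorr s f :
  4 * jump_corr s f = 2 * autocorr s f - autocorr s (f + oneF n) - autocorr s (f - oneF n).
Proof.
set o := oneF n.
have e1 : autocorr s f = \sum_(l : F) pm (s (l + o)) * pm (s (l + o + f)).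
  by rewrite /autocorr (reindex_inj (addIr o)).
have e2 : autocorr s (f - o) = \sum_(l : F) pm (s (l + o)) * pm (s (l + f)).
  rewrite /autocorr (reindex_inj (addIr o)); apply: eq_bigr => l _.
  by rewrite -addrA [o + _]addrCA subrr addr0.
have -> : 2 * autocorr s f = autocorr s f + autocorr s f by ring.
rewrite {1}e1 e2 /autocorr /jump_corr mulr_sumr -big_split -sumrB -sumrB; apply: eq_bigr => l _ /=.
rewrite /jump !addrA [l + f + o]addrAC.
by case: (s l); case: (s (l + o)); case: (s (l + f)); case: (s (l + o + f)).
Qed.

Definition jump_poly s : {poly int} := \sum_(f : F | f != 0) (jump_corr s f)%:P * 'X^f.

Lemma eq_jump_poly s t : autocorr s =1 autocorr t -> jump_poly s = jump_poly t.
Proof.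
move=> h; apply: eq_bigr => f _; congr (_%:P * _).
by apply: (@mulfI _ 4) => //; rewrite !jump_corr_autocorr !h.
Qed.

Lemma jump_poly_expand s : jump_poly s = \sum_(i <- jumps s) \sum_(j <- jumps s)
   (if inZp j != inZp i :> F
    then (pm (s (inZp i)) * pm (s (inZp j)))%:P * 'X^(nat_of_ord (inZp j - inZp i : F)%R)
    else 0).
Proof.
rewrite -(sum_jumps s (fun l => \sum_(j <- jumps s) (if inZp j != l :> F then
   (pm (s l) * pm (s (inZp j)))%:P * 'X^(nat_of_ord (inZp j - l : F)%R) else 0))).
under [RHS]eq_bigr => l _ do
  rewrite -(sum_jumps s (fun g => if g != l :> F then
   (pm (s l) * pm (s g))%:P * 'X^(nat_of_ord (g - l : F)%R) else 0)).
rewrite /jump_poly /jump_corr.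
have polyC_sum (G : F -> int) (p : {poly int}) : (\sum_l G l)%:P * p = \sum_l (G l)%:P * p.
  by rewrite (big_morph _ (@polyCD _) (polyC0 _)) mulr_suml.
rewrite (eq_bigr _ (fun f _ => polyC_sum _ _)).
rewrite exchange_big /=; apply: eq_bigr => l _.
case: (boolP (jump s l)) => hl; last first.
  by rewrite big1 // => f _; rewrite /= rmorph0 mul0r.
rewrite (reindex_inj (addIr (- l))) /= big_mkcond; apply: eq_bigr => g _.
rewrite subr_eq0 [l + _]addrC subrK.
by case: (g == l); case: (jump s g); rewrite /= ?rmorph0 ?mul0r.
Qed.

Lemma jump_poly_2jumps s c1 c2 : jumps s = [:: c1; c2] ->
  jump_poly s + 1 + 'X^N = prod_one_sub_Xn [:: c2 - c1; N - c2 + c1]%N.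
Proof.
move=> E; move: (jumps_sorted_bounded s); rewrite E /= => /andP[/andP[h12 _] /and3P[h1 h2 _]].
have [w1 w2] : s (inZp c1) = s 0 /\ s (inZp c2) = ~~ s 0.
  by split; rewrite sign_jumps ?E; try lia; rewrite /=; decide_nat_tests; rewrite /= ?addbF ?addbT.
rewrite jump_poly_expand E !big_cons !big_nil !val_inZpB // !inZp_inj //.
decide_nat_tests; rewrite /= w1 w2 !pm_mulsN !pm_mulNs polyCN polyC1.
have -> : 'X^N = 'X^(c2 - c1 + (N - c2 + c1)) :> {poly int} by congr 'X^_; lia.
have -> : (c1 + N - c2 = N - c2 + c1)%N by lia.
by rewrite /prod_one_sub_Xn !big_cons big_nil !exprD; ring.
Qed.

Lemma jump_poly_4jumps s c1 c2 c3 c4 : jumps s = [:: c1; c2; c3; c4] ->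
  jump_poly s + 1 + 'X^N + 'X^(c2 - c1 + (c4 - c3)) + 'X^(c3 - c2 + (N - c4 + c1))
  = prod_one_sub_Xn [:: c2 - c1; c3 - c2; c4 - c3; N - c4 + c1]%N.
Proof.
move=> E; move: (jumps_sorted_bounded s); rewrite E /=.
move=> /andP[/and4P[h12 h23 h34 _] /and5P[h1 h2 h3 h4 _]].
have [w1 w2 w3 w4] : [/\ s (inZp c1) = s 0, s (inZp c2) = ~~ s 0,
                         s (inZp c3) = s 0 & s (inZp c4) = ~~ s 0].
  by split; rewrite sign_jumps ?E; try lia; rewrite /=; decide_nat_tests; rewrite /= ?addbF ?addbT.
rewrite jump_poly_expand E !big_cons !big_nil !val_inZpB // !inZp_inj //.
decide_nat_tests; rewrite /= w1 w2 w3 w4 !pm_mulss !pm_mulsN !pm_mulNs polyCN polyC1.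
have [a1 ea1] : exists a, a = (c2 - c1)%N by eexists.
have [a2 ea2] : exists a, a = (c3 - c2)%N by eexists.
have [a3 ea3] : exists a, a = (c4 - c3)%N by eexists.
have [a4 ea4] : exists a, a = (N - c4 + c1)%N by eexists.
have -> : 'X^N = 'X^(a1 + a2 + a3 + a4) :> {poly int} by congr 'X^_; lia.
have -> : (c3 - c1 = a1 + a2)%N by lia.
have -> : (c4 - c1 = a1 + a2 + a3)%N by lia.
have -> : (c1 + N - c2 = a2 + a3 + a4)%N by lia.
have -> : (c4 - c2 = a2 + a3)%N by lia.
have -> : (c1 + N - c3 = a3 + a4)%N by lia.
have -> : (c2 + N - c3 = a3 + a4 + a1)%N by lia.
have -> : (c1 + N - c4 = a4)%N by lia.
have -> : (c2 + N - c4 = a4 + a1)%N by lia.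
have -> : (c3 + N - c4 = a4 + a1 + a2)%N by lia.
rewrite -ea1 -ea2 -ea3 -ea4 /prod_one_sub_Xn !big_cons big_nil !exprD.
ring.
Qed.

Lemma sum_pm_4jumps s c1 c2 c3 c4 : jumps s = [:: c1; c2; c3; c4] ->
  \sum_l pm (s l) =
    pm (s 0) * ((c3 - c2 + (N - c4 + c1))%:R - (c2 - c1 + (c4 - c3))%:R).
Proof.
move=> E; move: (jumps_sorted_bounded s); rewrite E /= => bounds.
have block a b k : (forall i, (a <= i < b)%N ->
      (i <= N)%N && (odd (count (fun j => j < i)%N [:: c1; c2; c3; c4]) == k)) ->
    \sum_(a <= i < b) pm (s (inZp i)) = pm (s 0 (+) k) * (b - a)%:R.
  move=> hk; rewrite mulr_natr -sumr_const_nat; apply: eq_big_nat => i /hk /andP[iN /eqP <-].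
  by rewrite sign_jumps ?E.
have -> : \sum_l pm (s l) = \sum_(0 <= i < N) pm (s (inZp i)).
  by rewrite big_mkord; apply: eq_bigr => i _; rewrite valZpK.
have [l01 l12 l23 l34 l4N] : [/\ 0 <= c1.+1, c1.+1 <= c2.+1, c2.+1 <= c3.+1,
                               c3.+1 <= c4.+1 & c4.+1 <= N]%N by split; lia.
rewrite (big_cat_nat l01 (leq_trans l12 (leq_trans l23 (leq_trans l34 l4N)))).
rewrite (big_cat_nat l12 (leq_trans l23 (leq_trans l34 l4N))).
rewrite (big_cat_nat l23 (leq_trans l34 l4N)) (big_cat_nat l34 l4N).
rewrite (block 0 c1.+1 false) ?(block c1.+1 c2.+1 true) ?(block c2.+1 c3.+1 false)
  ?(block c3.+1 c4.+1 true) ?(block c4.+1 N false);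
  try by move=> i /andP[? ?] /=; decide_nat_tests.
by rewrite /= addbF addbT pmN; case: (s 0); rewrite /pm; lia.
Qed.

Definition Phi_orbit s := [set Phi p.1.1 p.1.2 p.2 s | p : bool * F * bool].

Lemma jump_Phi_shift b d s f : jump (Phi b d false s) f = jump s (f + d).
Proof. by rewrite /jump /Phi !ffunE /= addrAC; case: b; case: (s _); case: (s _). Qed.

Lemma jump_Phi_reflect b d s f : jump (Phi b d true s) f = jump s (d - oneF n - f).
Proof.
rewrite /jump /Phi !ffunE /=.
have -> : - (f + oneF n) + d = d - oneF n - f by rewrite opprD addrC addrA addrAC.
have -> : - f + d = d - oneF n - f + oneF n by rewrite addrAC subrK addrC.
by case: b; case: (s _); case: (s _).
Qed.

Lemma Phi_orbit_shift s t d r :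
  map (fun x => x + d) (jumpsF s) = rot r (jumpsF t) ->
  t \in Phi_orbit s.
Proof.
move=> e; apply/imsetP; exists (t 0 (+) s (0 - d), - d, false) => //=.
apply: eq_from_jumps => [f|]; last by rewrite /Phi ffunE /= addbK.
rewrite jump_Phi_shift -!mem_jumpsF -(mem_rot r) -e -{1}(subrK d f).
by rewrite (mem_map (addIr d)).
Qed.

Lemma Phi_orbit_reflect s t d r :
  map (fun x => d - x) (jumpsF s) = rot r (rev (jumpsF t)) ->
  t \in Phi_orbit s.
Proof.
move=> e; apply/imsetP; exists (t 0 (+) s (- 0 + (d + oneF n)), d + oneF n, true) => //=.
apply: eq_from_jumps => [f|]; last by rewrite /Phi ffunE /= addbK.
have inj : injective (fun x : F => d - x) by move=> x y /addrI /oppr_inj.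
rewrite jump_Phi_reflect addrK -!mem_jumpsF -(mem_rev (jumpsF t)) -(mem_rot r) -e.
by rewrite {1}(_ : f = d - (d - f)) ?(mem_map inj) // opprB addrC subrK.
Qed.

Lemma Phi_orbit_2jumps s t c1 c2 d1 d2 : jumps s = [:: c1; c2] -> jumps t = [:: d1; d2] ->
  jump_poly s = jump_poly t -> t \in Phi_orbit s.
Proof.
move=> Es Et hP; move: (jumps_sorted_bounded s) (jumps_sorted_bounded t).
rewrite Es Et /= => bs bt.
have : perm_eq [:: d2 - d1; N - d2 + d1]%N [:: c2 - c1; N - c2 + c1]%N.
  apply: perm_eq_prod_one_sub_Xn; [by rewrite /=; lia | by rewrite /=; lia |].
  by rewrite -(jump_poly_2jumps Es) -(jump_poly_2jumps Et) hP.
case/perm_eq_pair => [[e1 e2]|[e1 e2]].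
- apply: (@Phi_orbit_shift _ _ (inZp (d1 + N - c1)) 0); rewrite /jumpsF Es Et /=.
  by congr [:: _; _]; apply: inZp_addE; lia.
- apply: (@Phi_orbit_shift _ _ (inZp (d1 + N - c2)) 1); rewrite /jumpsF Es Et /=.
  by congr [:: _; _]; apply: inZp_addE; lia.
Qed.

Lemma perm_eq_gaps_4jumps s t c1 c2 c3 c4 d1 d2 d3 d4 :
  jumps s = [:: c1; c2; c3; c4] -> jumps t = [:: d1; d2; d3; d4] ->
  jump_poly s = jump_poly t -> (\sum_l pm (s l)) ^+ 2 = (\sum_l pm (t l)) ^+ 2 ->
  perm_eq [:: d2 - d1; d3 - d2; d4 - d3; N - d4 + d1]%N
          [:: c2 - c1; c3 - c2; c4 - c3; N - c4 + c1]%N /\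
  (d2 - d1 + (d4 - d3) = c2 - c1 + (c4 - c3) \/
   d2 - d1 + (d4 - d3) = c3 - c2 + (N - c4 + c1))%N.
Proof.
move=> Es Et hP hsq; move: (jumps_sorted_bounded s) (jumps_sorted_bounded t).
rewrite Es Et /= => bs bt.
have hpair : (d2 - d1 + (d4 - d3) = c2 - c1 + (c4 - c3) \/
              d2 - d1 + (d4 - d3) = c3 - c2 + (N - c4 + c1))%N.
  move/eqP: hsq; rewrite (sum_pm_4jumps Es) (sum_pm_4jumps Et) !exprMn !pm_sqr !mul1r.
  by rewrite eqf_sqr => /orP[] /eqP; lia.
split=> //; apply: perm_eq_prod_one_sub_Xn; [by rewrite /=; lia | by rewrite /=; lia |].
rewrite -(jump_poly_4jumps Es) -(jump_poly_4jumps Et) hP.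
case: hpair => e.
  have -> : (d2 - d1 + (d4 - d3) = c2 - c1 + (c4 - c3))%N by lia.
  by have -> : (d3 - d2 + (N - d4 + d1) = c3 - c2 + (N - c4 + c1))%N by lia.
have -> : (d2 - d1 + (d4 - d3) = c3 - c2 + (N - c4 + c1))%N by lia.
have -> : (d3 - d2 + (N - d4 + d1) = c2 - c1 + (c4 - c3))%N by lia.
by ring.
Qed.

Lemma Phi_orbit_4jumps s t c1 c2 c3 c4 d1 d2 d3 d4 :
  jumps s = [:: c1; c2; c3; c4] -> jumps t = [:: d1; d2; d3; d4] ->
  jump_poly s = jump_poly t -> (\sum_l pm (s l)) ^+ 2 = (\sum_l pm (t l)) ^+ 2 ->
  t \in Phi_orbit s.
Proof.
move=> Es Et hP hsq; have [hp hpair] := perm_eq_gaps_4jumps Es Et hP hsq.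
move: (jumps_sorted_bounded s) (jumps_sorted_bounded t); rewrite Es Et /= => bs bt.
case: (dihedral_of_perm_eq4 hp hpair) => [|[|[|[|[|[|[|]]]]]]] [? [? [? ?]]];
  [ apply: (@Phi_orbit_shift _ _ (inZp (d1 + N - c1)) 0)
  | apply: (@Phi_orbit_shift _ _ (inZp (d1 + N - c2)) 3)
  | apply: (@Phi_orbit_shift _ _ (inZp (d1 + N - c3)) 2)
  | apply: (@Phi_orbit_shift _ _ (inZp (d1 + N - c4)) 1)
  | apply: (@Phi_orbit_reflect _ _ (inZp (d1 + c4)) 0)
  | apply: (@Phi_orbit_reflect _ _ (inZp (d1 + c3)) 1)
  | apply: (@Phi_orbit_reflect _ _ (inZp (d1 + c2)) 2)
  | apply: (@Phi_orbit_reflect _ _ (inZp (d1 + c1)) 3) ];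
  rewrite /jumpsF Es Et /=; congr [:: _; _; _; _];
  first [apply: inZp_addE | apply: inZp_subE]; lia.
Qed.

Lemma Phi_orbit_autocorr s t :
  (nblocks s <= 4)%N -> autocorr s =1 autocorr t -> t \in Phi_orbit s.
Proof.
move=> hs hA.
have hnb : size (jumps t) = size (jumps s).
  by move: (hA (oneF n)); rewrite !size_jumps !autocorr_oneF; lia.
have hP := eq_jump_poly hA.
have hsq : (\sum_l pm (s l)) ^+ 2 = (\sum_l pm (t l)) ^+ 2.
  by rewrite -!sum_autocorr; apply: eq_bigr => f _; exact: hA.
move: hs (nblocks_even s); rewrite -size_jumps.
case Es: (jumps s) hnb => [|c1 [|c2 [|c3 [|c4 [|c5 l]]]]] //= hnb _ _;
  case Et: (jumps t) hnb => [|d1 [|d2 [|d3 [|d4 [|d5 l']]]]] //= _.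
- by apply: (@Phi_orbit_shift _ _ 0 0); rewrite /jumpsF Es Et.
- exact: Phi_orbit_2jumps Es Et hP.
- exact: Phi_orbit_4jumps Es Et hP hsq.
Qed.

End CyclicSequences.

Theorem mainTheorem11 (n : nat) (sg : {ffun 'I_n.+1 -> bool}) :
  (nblocks sg <= 4)%N -> Dstab sg = Dsym sg.
Proof.
move=> h4; apply: eq_card => t; rewrite inE.
apply/forallP/idP => [h|/imsetP[p _ ->] f]; last by rewrite autocorr_Phi.
by apply: Phi_orbit_autocorr h4 _ => f; rewrite (eqP (h f)).
Qed.
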